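(* Let $A$ be a set of integers, each at least $3$, let $A_e$ be the set of even elements of $A$, and let $k\ge 2$ with $2k\notin A$. Then, as $n\to\infty$, $$ex(n,C_{2k},\mathcal C_A)=\Theta\big(ex(n,C_{2k},\mathcal C_{A_e})\big).$$
   Context: $C_k$ denotes the cycle with $k$ vertices; for a set $B$ of integers each at least 3, $\mathcal C_B=\{C_b:b\in B\}$. For a graph $H$ and a family of graphs $\mathcal F$, $ex(n,H,\mathcal F)$ is the maximum number of subgraphs isomorphic to $H$ in an $n$-vertex graph containing no member of $\mathcal F$ as a subgraph. *)

From mathcomp Require Import all_boot.
From mathcomp Require Import boolp.
Set Implicit Arguments. Unset Strict Implicit. Unset Printing Implicit Defensive.

Definition is_graph (T : finType) (E : {set {set T}}) : bool :=
  [forall e in E, #|e| == 2].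

Definition is_cycle_edgeset (T : finType) (L : nat) (S : {set {set T}}) : bool :=
  (3 <= L) &&
  [exists f : {ffun 'I_L -> T},
     injectiveb f && (S == [set [set f i; f (ordS i)] | i : 'I_L])].

(* Number of subgraphs of E isomorphic to C_L (a copy of a cycle is
   determined by its edge set). *)
Definition num_cycles (T : finType) (L : nat) (E : {set {set T}}) : nat :=
  #|[set S : {set {set T}} | (S \subset E) && is_cycle_edgeset L S]|.

Definition has_cycle (T : finType) (b : nat) (E : {set {set T}}) : bool :=
  [exists S : {set {set T}}, (S \subset E) && is_cycle_edgeset b S].

Definition cycle_free (T : finType) (B : pred nat) (E : {set {set T}}) : Prop :=
  forall b, B b -> ~~ has_cycle b E.

Definition ex_cycles (n L : nat) (B : pred nat) : nat :=
  \max_(E : {set {set 'I_n}} | is_graph E && asbool (cycle_free B E))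
     num_cycles L E.

Definition even_part (B : pred nat) : pred nat := [pred a | B a && ~~ odd a].

(** A cut of a graph (the edges with exactly one end in a vertex set X) is
    bipartite, so it contains no odd cycle; hence a graph with no cycle of
    length in A_e has cuts that are C_A-free.  Conversely, an even cycle of
    length L on n vertices lies in the cut of 2^(n-L) of the 2^n vertex sets
    (colour its vertices alternately, the other vertices arbitrarily), so
    averaging over all X some cut keeps a 2^-L fraction of the copies of
    C_{2k}.  This gives ex(n,C_{2k},C_{A_e}) <= 2^(2k) ex(n,C_{2k},C_A), and
    the reverse inequality holds because C_{A_e}-freeness is weaker than
    C_A-freeness. *)

From mathcomp Require Import all_boot.
From mathcomp Require Import zify.
From mathcomp Require Import boolp.
Set Implicit Arguments. Unset Strict Implicit. Unset Printing Implicit Defensive.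

Lemma ordS_neq L (i : 'I_L) : 2 <= L -> i != ordS i.
Proof.
move=> L_ge2; apply/eqP => /(congr1 val) /=.
have := ltn_ord i; rewrite leq_eqVlt => /orP [/eqP iSL | iSL].
  by rewrite -[X in _ %% X]iSL modnn => i0; move: iSL L_ge2; rewrite i0 => <-.
by rewrite modn_small // => /eqP; rewrite eqn_leq ltnn andbF.
Qed.

Lemma odd_ordS L (i : 'I_L) : ~~ odd L -> odd (ordS i) = ~~ odd i.
Proof.
move=> evenL /=; have := ltn_ord i; rewrite leq_eqVlt => /orP [/eqP iSL | iSL].
  by rewrite -[X in _ %% X]iSL modnn; rewrite -iSL /= negbK in evenL; rewrite evenL.
by rewrite modn_small.
Qed.

Lemma odd_cycle_not_alternating (T : finType) L (f : 'I_L -> T) (X : {set T}) :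
  odd L -> ~ (forall i, (f i \in X) != (f (ordS i) \in X)).
Proof.
case: L f => [//|m] f oddL alt.
pose g j := f (inord j) \in X.
have gS j : j < m -> g j.+1 = ~~ g j.
  move=> lt_jm; have := alt (inord j).
  have -> : ordS (inord j : 'I_m.+1) = inord j.+1.
    by apply: val_inj; rewrite /= !inordK ?modn_small // ltnW.
  by rewrite /g; case: (f (inord j) \in X); case: (f (inord j.+1) \in X).
have g_parity j : j <= m -> g j = g 0 (+) odd j.
  by elim: j => [|j IHj] le_jm; rewrite ?addbF // gS // IHj ?(ltnW le_jm) // addbN.
have := alt (inord m).
have -> : ordS (inord m : 'I_m.+1) = inord 0.
  by apply: val_inj; rewrite /= !inordK // modnn.
rewrite -/(g m) -/(g 0) g_parity //.
by move: oddL => /= /negbTE ->; rewrite addbF eqxx.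
Qed.

Section Cuts.

Variable T : finType.
Implicit Types (E S : {set {set T}}) (X : {set T}).

Definition cut E X : {set {set T}} := [set e in E | #|e :&: X| == 1].

Lemma cut_sub E X : cut E X \subset E.
Proof. by apply/subsetP => e; rewrite inE => /andP []. Qed.

Lemma is_graph_cut E X : is_graph E -> is_graph (cut E X).
Proof.
move=> /forallP graphE; apply/forallP => e; apply/implyP.
by rewrite inE => /andP [eE _]; exact: (implyP (graphE e)).
Qed.

Lemma card_set2I_eq1 (a b : T) X : a != b ->
  (#|[set a; b] :&: X| == 1) = ((a \in X) != (b \in X)).
Proof.
move=> neq_ab.
have set1I c : [set c] :&: X = if c \in X then [set c] else set0.
  apply/setP => x; rewrite !inE; case cX: (c \in X); rewrite !inE //.
    by case: eqP => // ->.
  by case: eqP => // ->; rewrite cX.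
rewrite setIUl !set1I.
case: (a \in X); case: (b \in X); rewrite ?set0U ?setU0 ?cards0 ?cards1 //.
by rewrite cards2 neq_ab.
Qed.

Lemma cycle_edge_neq L (f : 'I_L -> T) (i : 'I_L) :
  3 <= L -> injective f -> f i != f (ordS i).
Proof. by move=> L_ge3 inj_f; rewrite (inj_eq inj_f) ordS_neq // ltnW. Qed.

Lemma mem_cut_set2 E X (a b : T) : a != b ->
  ([set a; b] \in cut E X) = ([set a; b] \in E) && ((a \in X) != (b \in X)).
Proof. by move=> neq_ab; rewrite inE card_set2I_eq1. Qed.

Lemma has_cycle_sub b E1 E2 : E1 \subset E2 -> has_cycle b E1 -> has_cycle b E2.
Proof.
move=> sE12 /existsP [S /andP [sSE1 cycS]].
by apply/existsP; exists S; rewrite cycS (subset_trans sSE1 sE12).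
Qed.

Lemma cut_no_odd_cycle E X b : odd b -> ~~ has_cycle b (cut E X).
Proof.
move=> odd_b; apply/negP => /existsP [S /andP [sSc]].
case/andP => b_ge3 /existsP [f /andP [/injectiveP inj_f /eqP defS]].
apply: (odd_cycle_not_alternating (f := f) (X := X) odd_b) => i.
have : [set f i; f (ordS i)] \in S by rewrite defS; apply: imset_f.
move/(subsetP sSc); rewrite mem_cut_set2 ?cycle_edge_neq //.
by case/andP.
Qed.

Lemma cut_cycle_free (B : pred nat) E X :
  cycle_free (even_part B) E -> cycle_free B (cut E X).
Proof.
move=> freeE b Bb; case/boolP: (odd b) => [|even_b]; first exact: cut_no_odd_cycle.
apply: contra (freeE b _); first exact: has_cycle_sub (cut_sub E X).
by apply/andP.
Qed.

Lemma cycle_length_le_card L S : is_cycle_edgeset L S -> L <= #|T|.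
Proof.
case/andP => _ /existsP [f /andP [/injectiveP inj_f _]].
by rewrite -[L]card_ord; exact: leq_card inj_f.
Qed.

(* The sets X = Y :|: (even-indexed vertices of the cycle), Y outside the
   cycle, are pairwise distinct and all cut every edge of the cycle. *)
Lemma card_cuts_containing_even_cycle L E S :
  ~~ odd L -> S \subset E -> is_cycle_edgeset L S ->
  2 ^ (#|T| - L) <= #|[set X | S \subset cut E X]|.
Proof.
move=> evenL sSE /andP [L_ge3 /existsP [f /andP [/injectiveP inj_f /eqP defS]]].
pose V := [set f i | i : 'I_L].
pose V0 := [set f i | i in [set i : 'I_L | ~~ odd i]].
have cardV : #|V| = L by rewrite card_imset // card_ord.
have mem_V0 (Y : {set T}) j : Y \subset ~: V -> (f j \in Y :|: V0) = ~~ odd j.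
  move=> sYV; rewrite in_setU mem_imset // inE.
  suff -> : (f j \in Y) = false by [].
  by apply/negP => /(subsetP sYV); rewrite inE imset_f.
have V0K : {in powerset (~: V), cancel (fun Y => Y :|: V0) (fun Z => Z :&: ~: V)}.
  move=> Y; rewrite inE => sYV; apply/setP => x; rewrite !inE.
  case/boolP: (x \in Y) => [/(subsetP sYV)|xY]; first by rewrite inE.
  by case/boolP: (x \in V0) => //= /imsetP [i _ ->]; rewrite imset_f.
have -> : #|T| - L = #|~: V| by have := cardsC V; rewrite cardV; lia.
rewrite -card_powerset -(card_in_imset (can_in_inj V0K)).
apply/subset_leq_card/subsetP => X /imsetP [Y]; rewrite !inE => sYV ->.
apply/subsetP => e; rewrite defS => /imsetP [i _ ->].
rewrite mem_cut_set2 ?cycle_edge_neq // (subsetP sSE) /=; last first.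
  by rewrite defS; apply: imset_f.
by rewrite !mem_V0 // odd_ordS // negbK; case: (odd i).
Qed.

End Cuts.

Lemma num_cycles_le_ex_cycles n L (B : pred nat) (E : {set {set 'I_n}}) :
  is_graph E -> cycle_free B E -> num_cycles L E <= ex_cycles n L B.
Proof.
move=> graphE freeE; apply: leq_bigmax_cond.
by rewrite graphE; apply/asboolP.
Qed.

Lemma ex_cycles_antimono n L (B B' : pred nat) :
  (forall b, B b -> B' b) -> ex_cycles n L B' <= ex_cycles n L B.
Proof.
move=> sBB'; apply/bigmax_leqP => E /andP [graphE /asboolP freeE].
by apply: num_cycles_le_ex_cycles => // b /sBB'; exact: freeE.
Qed.

Lemma num_even_cycles_le_ex_cycles n L (B : pred nat) (E : {set {set 'I_n}}) :
  ~~ odd L -> is_graph E -> cycle_free (even_part B) E ->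
  num_cycles L E <= 2 ^ L * ex_cycles n L B.
Proof.
move=> evenL graphE freeE.
pose C := [set S : {set {set 'I_n}} | (S \subset E) && is_cycle_edgeset L S].
change (#|C| <= 2 ^ L * ex_cycles n L B).
have [-> | [S0]] := set_0Vmem C; first by rewrite cards0.
rewrite inE => /andP [_ /cycle_length_le_card]; rewrite card_ord => le_Ln.
have sum_cuts_le : \sum_(X : {set 'I_n}) num_cycles L (cut E X) <= 2 ^ n * ex_cycles n L B.
  rewrite -[in 2 ^ n](card_ord n) -cardsT -card_powerset powersetT cardsT -sum_nat_const.
  apply: leq_sum => X _; apply: num_cycles_le_ex_cycles; first exact: is_graph_cut.
  exact: cut_cycle_free.
have sum_cuts_ge : #|C| * 2 ^ (n - L) <= \sum_(X : {set 'I_n}) num_cycles L (cut E X).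
  rewrite -sum_nat_const.
  apply: (@leq_trans (\sum_(S in C) #|[set X | S \subset cut E X]|)).
    apply: leq_sum => S; rewrite inE => /andP [sSE cycS].
    by rewrite -[n in 2 ^ (n - L)](card_ord n) card_cuts_containing_even_cycle.
  under eq_bigr do rewrite -sum1dep_card.
  rewrite (exchange_big_dep predT) //=; apply: leq_sum => X _.
  rewrite sum1dep_card; apply: subset_leq_card; apply/subsetP => S.
  rewrite !inE => /andP [/andP [_ cycS] sScut].
  by rewrite sScut cycS.
rewrite -(leq_pmul2r (expn_gt0 2 (n - L))) mulnAC -expnD subnKC //.
exact: leq_trans sum_cuts_ge sum_cuts_le.
Qed.

Theorem lemma1 (A : pred nat) (k : nat)
  (hA : forall a, A a -> 3 <= a) (hk : 2 <= k) (h2k : ~~ A (2 * k)) :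
  exists c : nat, 0 < c /\ exists N : nat, forall n : nat, N <= n ->
    ex_cycles n (2 * k) (even_part A) <= c * ex_cycles n (2 * k) A /\
    ex_cycles n (2 * k) A <= c * ex_cycles n (2 * k) (even_part A).
Proof.
exists (2 ^ (2 * k)); split; first by rewrite expn_gt0.
exists 0 => n _; split.
  apply/bigmax_leqP => E /andP [graphE /asboolP freeE].
  by apply: num_even_cycles_le_ex_cycles => //; rewrite oddM.
apply: (@leq_trans (ex_cycles n (2 * k) (even_part A))).
  by apply: ex_cycles_antimono => b /andP [].
by rewrite leq_pmull ?expn_gt0.
Qed.
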